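(* Let $p,q\in(0,1/2)$. If $K_{pq}$ is a twofold Cantor set, then $\frac{\log p}{\log q}\notin\mathbb Q$.
   Context: For $p,q\in(0,1/2)$ let $S_1(x)=px$, $S_2(x)=qx$, $S_3(x)=px+1-p$, $S_4(x)=qx+1-q$, let $K_{pq}$ be the attractor of $\{S_1,S_2,S_3,S_4\}$ (the unique nonempty compact $K\subset\mathbb R$ with $K=\bigcup_{i=1}^4S_i(K)$), and let $A=S_3(K_{pq})\cup S_4(K_{pq})$. $K_{pq}$ is called a twofold Cantor set if $S_1^m(A)\cap S_2^n(A)=\varnothing$ for all $m,n\in\mathbb N$. *)

From Stdlib Require Import Reals Rtopology ZArith.
Open Scope R_scope.

Definition S1 (p q : R) (x : R) : R := p * x.
Definition S2 (p q : R) (x : R) : R := q * x.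
Definition S3 (p q : R) (x : R) : R := p * x + 1 - p.
Definition S4 (p q : R) (x : R) : R := q * x + 1 - q.

Definition img (f : R -> R) (X : R -> Prop) : R -> Prop :=
  fun y => exists x, X x /\ y = f x.

(* K is the attractor of {S1,S2,S3,S4}: nonempty, compact, and
   K = S1(K) ∪ S2(K) ∪ S3(K) ∪ S4(K). (Such K is unique by Hutchinson.) *)
Definition is_attractor (p q : R) (K : R -> Prop) : Prop :=
  (exists x, K x) /\ compact K /\
  forall y, K y <-> (img (S1 p q) K y \/ img (S2 p q) K y \/
                     img (S3 p q) K y \/ img (S4 p q) K y).

Definition setA (p q : R) (K : R -> Prop) : R -> Prop :=
  fun y => img (S3 p q) K y \/ img (S4 p q) K y.

Definition twofold_cantor (p q : R) (K : R -> Prop) : Prop :=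
  forall m n : nat, (1 <= m)%nat -> (1 <= n)%nat ->
    forall y, ~ (img (Nat.iter m (S1 p q)) (setA p q K) y /\
                 img (Nat.iter n (S2 p q)) (setA p q K) y).

Definition is_rational (x : R) : Prop :=
  exists (a b : Z), b <> 0%Z /\ x = IZR a / IZR b.

From Stdlib Require Import Reals Rtopology ZArith Lra Lia.
Open Scope R_scope.

(* If log p / log q = n / m with m, n >= 1, then p^m = q^n, so the maps S1^m
   and S2^n are the same homothety x |-> p^m x.  They then send the nonempty
   set A onto the same set, contradicting S1^m(A) ∩ S2^n(A) = ∅. *)

Lemma iter_mult (c : R) (m : nat) (x : R) :
  Nat.iter m (fun y => c * y) x = c ^ m * x.
Proof. induction m as [|m IH]; simpl; [ring | rewrite IH; ring]. Qed.

Lemma INR_Z_abs_nat (z : Z) : INR (Z.abs_nat z) = Rabs (IZR z).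
Proof. now rewrite INR_IZR_INZ, Zabs2Nat.id_abs, abs_IZR. Qed.

Lemma is_rational_pos_nat_ratio (x : R) :
  is_rational x -> 0 < x ->
  exists m n : nat, (1 <= m)%nat /\ (1 <= n)%nat /\ x = INR n / INR m.
Proof.
  intros [a [b [Hb Hx]]] Hpos.
  assert (Ha : a <> 0%Z).
  { intros ->. rewrite Hx in Hpos. unfold Rdiv in Hpos. lra. }
  exists (Z.abs_nat b), (Z.abs_nat a).
  split; [lia | split; [lia |]].
  rewrite !INR_Z_abs_nat, <- (Rabs_pos_eq x) by lra.
  rewrite Hx. unfold Rdiv. now rewrite Rabs_mult, Rabs_inv.
Qed.

Lemma pow_eq_of_ln_ratio (p q : R) (m n : nat) :
  0 < p -> 0 < q -> ln q <> 0 -> (1 <= m)%nat ->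
  ln p / ln q = INR n / INR m -> p ^ m = q ^ n.
Proof.
  intros Hp Hq Hlq Hm Hratio.
  assert (Hm0 : INR m <> 0) by (apply not_0_INR; lia).
  assert (Hcross : INR m * ln p = INR n * ln q).
  { replace (ln p) with (ln p / ln q * ln q) by (field; exact Hlq).
    rewrite Hratio. field. exact Hm0. }
  apply ln_inv; try apply pow_lt; auto.
  now rewrite !ln_pow.
Qed.

Lemma ln_neg_of_lt_1 (x : R) : 0 < x < 1 -> ln x < 0.
Proof. intros Hx. rewrite <- ln_1. apply ln_increasing; lra. Qed.

Lemma twofold_cantor_pow_neq (p q : R) (K : R -> Prop) (m n : nat) :
  (exists k, K k) -> twofold_cantor p q K ->
  (1 <= m)%nat -> (1 <= n)%nat -> p ^ m <> q ^ n.
Proof.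
  intros [k Hk] Htw Hm Hn Hpow.
  assert (HA : setA p q K (S3 p q k)) by (left; exists k; auto).
  apply (Htw m n Hm Hn (p ^ m * S3 p q k)).
  split; exists (S3 p q k); split; auto.
  - symmetry. apply iter_mult.
  - rewrite Hpow. symmetry. apply iter_mult.
Qed.

Theorem proposition5 (p q : R) (K : R -> Prop) :
  0 < p < 1/2 -> 0 < q < 1/2 ->
  is_attractor p q K ->
  twofold_cantor p q K ->
  ~ is_rational (ln p / ln q).
Proof.
  intros Hp Hq [HK _] Htw Hrat.
  assert (Hlp : ln p < 0) by (apply ln_neg_of_lt_1; lra).
  assert (Hlq : ln q < 0) by (apply ln_neg_of_lt_1; lra).
  destruct (is_rational_pos_nat_ratio _ Hrat (Rdiv_neg_neg _ _ Hlp Hlq))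
    as [m [n [Hm [Hn Hratio]]]].
  apply (twofold_cantor_pow_neq p q K m n HK Htw Hm Hn).
  apply pow_eq_of_ln_ratio; [lra | lra | lra | exact Hm | exact Hratio].
Qed.
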